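(* Let $g: X_1\times\cdots\times X_n\to A$ be an $n$-person game form, let $i\in[n]$, let $j\neq k$ be two elements of $X_i$, and let $y^1,y^2,y^3,y^4\in X_{-i}$ (not necessarily pairwise distinct) be such that (1) $g(j,y^1)\neq g(j,y^2)$; (2) $g(k,y^3)\neq g(k,y^4)$; (3) $g(j,y^t)\neq g(k,y^t)$ for all $t=1,2,3,4$. Then $g$ is not weakly totally tight.
   Context: Let $X_1,\dots,X_n$ and $A$ be finite nonempty sets. An $n$-person game form is a map $g: X_1\times\cdots\times X_n\to A$; elements $x=(x_1,\dots,x_n)$ of $X=X_1\times\cdots\times X_n$ are strategy profiles, elements of $A$ are outcomes. For a direction (player) $i\in[n]$ write $X_{-i}=\prod_{t\neq i}X_t$, and for $s\in X_i$, $y\in X_{-i}$ write $(s,y)$ for the profile whose $i$-th coordinate is $s$ and whose other coordinates are given by $y$. The game form $g$ is weakly totally tight (WTT) if for every $i\in[n]$, all $s\neq s'$ in $X_i$ and all $y\neq y'$ in $X_{-i}$, at least one of the equalities $g(s,y)=g(s,y')$, $g(s,y)=g(s',y)$, $g(s',y')=g(s',y)$, $g(s',y')=g(s,y')$ holds. *)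

From mathcomp Require Import all_boot.
Set Implicit Arguments. Unset Strict Implicit. Unset Printing Implicit Defensive.

Definition profile (n : nat) (X : 'I_n -> finType) := forall t : 'I_n, X t.

Definition minus_profile (n : nat) (X : 'I_n -> finType) (i : 'I_n) :=
  forall t : {t : 'I_n | t != i}, X (sval t).

(* (s, y): the profile with i-th coordinate s and other coordinates from y. *)
Definition join (n : nat) (X : 'I_n -> finType) (i : 'I_n) (s : X i)
  (y : minus_profile X i) : profile X :=
  fun t => match (t =P i) with
           | ReflectT e => eq_rect_r X s e
           | ReflectF ne => y (exist _ t (introN eqP ne))
           end.

Definition weakly_totally_tight (n : nat) (X : 'I_n -> finType) (A : finType)
  (g : profile X -> A) : Prop :=
  forall (i : 'I_n) (s s' : X i) (y y' : minus_profile X i),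
    s <> s' -> y <> y' ->
    g (join s y) = g (join s y') \/ g (join s y) = g (join s' y) \/
    g (join s' y') = g (join s' y) \/ g (join s' y') = g (join s y').

From mathcomp Require Import all_boot.
From Stdlib Require Import Classical.

Set Implicit Arguments.
Unset Strict Implicit.
Unset Printing Implicit Defensive.

(* Compare the rows j and k of g on the columns y where they differ. Weak total
   tightness forces any two such columns to agree in row j or in row k. But two
   rows that pairwise "agree in one of them" must have one row entirely constant,
   which (1) and (2) rule out. *)

Lemma agree_in_some_row (T : Type) (A : eqType) (P : T -> Prop) (a b : T -> A) :
  (forall t t', P t -> P t' -> a t = a t' \/ b t = b t') ->
  forall t1 t2 t3 t4, P t1 -> P t2 -> P t3 -> P t4 ->
  a t1 = a t2 \/ b t3 = b t4.
Proof.
move=> agree t1 t2 t3 t4 P1 P2 P3 P4.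
have [-> | a12] := eqVneq (a t1) (a t2); first by left.
have b12 : b t1 = b t2 by case: (agree t1 t2 P1 P2) => // /eqP; rewrite (negPf a12).
have b_const t : P t -> b t = b t1.
  move=> Pt; have [at1 | at1] := eqVneq (a t) (a t1).
  - case: (agree t t2 Pt P2) => [at2 | -> //].
    by move: a12; rewrite -at1 at2 eqxx.
  - by case: (agree t t1 Pt P1) => // /eqP; rewrite (negPf at1).
by right; rewrite (b_const t3 P3) (b_const t4 P4).
Qed.

Lemma wtt_separating_columns_agree (n : nat) (X : 'I_n -> finType) (A : finType)
  (g : profile X -> A) (i : 'I_n) (j k : X i) (y y' : minus_profile X i) :
  weakly_totally_tight g -> j <> k ->
  g (join j y) <> g (join k y) -> g (join j y') <> g (join k y') ->
  g (join j y) = g (join j y') \/ g (join k y) = g (join k y').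
Proof.
move=> wtt jk sep_y sep_y'.
have [-> | yy'] := classic (y = y'); first by left.
case: (wtt i j k y y' jk yy') => [| [| []]] e; first by left.
- by case: sep_y.
- by right.
- by case: sep_y'.
Qed.

Theorem mainTheorem1 (n : nat) (X : 'I_n -> finType) (A : finType)
  (HX : forall t : 'I_n, 0 < #|X t|) (HA : 0 < #|A|)
  (g : profile X -> A) (i : 'I_n) (j k : X i) (y1 y2 y3 y4 : minus_profile X i) :
  j <> k ->
  g (join j y1) <> g (join j y2) ->
  g (join k y3) <> g (join k y4) ->
  g (join j y1) <> g (join k y1) ->
  g (join j y2) <> g (join k y2) ->
  g (join j y3) <> g (join k y3) ->
  g (join j y4) <> g (join k y4) ->
  ~ weakly_totally_tight g.
Proof.
move=> jk row_j row_k sep1 sep2 sep3 sep4 wtt.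
have separating_columns_agree y y' :=
  @wtt_separating_columns_agree _ _ _ g i j k y y' wtt jk.
have := agree_in_some_row separating_columns_agree sep1 sep2 sep3 sep4.
by case=> [/row_j | /row_k].
Qed.
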